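(* Let $T$ be a tree with positive edge weights rooted at the homebase $r$, and let $q\ge 0$. If a cost-optimal strategy exploring $T$ uses only one agent, then that agent terminates in a leaf of $T$ at maximum distance from $r$.
   Context: Exploration model: given a connected graph with positive edge weights, a homebase vertex, and invoking cost $q\ge 0$, a strategy is a sequence of moves, each either invoking a new agent (appearing at the homebase) or an agent traversing an edge incident to its current vertex. A vertex is explored when first visited; the strategy explores the graph when every vertex has been visited by some agent (agents need not return). With $k$ agents, agent $i$ traversing total distance $d_i$ (weights counted with multiplicity), the cost is $kq+\sum_i d_i$; a strategy is cost-optimal if it explores the graph with minimum cost (off-line setting). Distances are weighted shortest-path distances; a leaf is a non-root vertex with no children. *)

From mathcomp Require Import all_boot all_order all_algebra.
Set Implicit Arguments. Unset Strict Implicit. Unset Printing Implicit Defensive.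
Import Order.TTheory GRing.Theory Num.Theory.
Local Open Scope ring_scope.

Section Exploration.
Variables (R : realFieldType) (V : finType).
(* undirected graph: symmetric irreflexive edge relation [e],
   edge weights [w x y] (meaningful when [e x y]) *)
Variables (e : rel V) (w : V -> V -> R).

Definition connected_graph : Prop := forall x y : V, connect e x y.

Definition has_cycle : Prop :=
  exists (x : V) (p : seq V),
    [/\ (2 <= size p)%N, uniq (x :: p), path e x p & e (last x p) x].

Definition is_tree : Prop :=
  [/\ symmetric e, irreflexive e, connected_graph & ~ has_cycle].

Fixpoint walk_weight (x : V) (p : seq V) : R :=
  if p is y :: p' then w x y + walk_weight y p' else 0.

Definition is_dist (u v : V) (d : R) : Prop :=
  (exists p, [/\ path e u p, last u p = v & walk_weight u p = d]) /\
  (forall p, path e u p -> last u p = v -> d <= walk_weight u p).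

Definition child (r x y : V) : Prop :=
  exists p : seq V,
    [/\ path e r (rcons p y), uniq (r :: rcons p y) & last r p = x].

Definition leaf (r x : V) : Prop := x != r /\ forall y, ~ child r x y.

Variables (r : V) (q : R).

(* a move: invoke a new agent (appearing at r), or agent number i
   (0-based, in order of invocation) traverses the edge to v *)
Inductive move := Invoke | Traverse of nat & V.

(* [run pos s]: executing moves [s] from agent positions [pos];
   returns (final positions, cost incurred, vertices visited), or None
   if some move is illegal. *)
Fixpoint run (pos : seq V) (s : seq move) : option (seq V * R * seq V) :=
  match s with
  | [::] => Some (pos, 0, [::])
  | Invoke :: s' =>
      if run (rcons pos r) s' is Some (p, c, vis)
      then Some (p, q + c, r :: vis) else None
  | Traverse i v :: s' =>
      if (i < size pos)%N && e (nth r pos i) v then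
        if run (set_nth r pos i v) s' is Some (p, c, vis)
        then Some (p, w (nth r pos i) v + c, v :: vis) else None
      else None
  end.

(* strategy s (started with no agents) is legal, explores every vertex,
   has cost c (= k q + sum of distances) and ends with agents at positions p *)
Definition explores_with (s : seq move) (p : seq V) (c : R) : Prop :=
  exists vis, run [::] s = Some (p, c, vis) /\ forall v : V, v \in vis.

Definition cost_optimal (s : seq move) : Prop :=
  exists p c, explores_with s p c /\
    forall s' p' c', explores_with s' p' c' -> c <= c'.

End Exploration.

From mathcomp Require Import all_boot all_order all_algebra.
From mathcomp Require Import lra zify.
Set Implicit Arguments. Unset Strict Implicit. Unset Printing Implicit Defensive.
Import Order.TTheory GRing.Theory Num.Theory.
Local Open Scope ring_scope.

(* A walk from the root that visits every vertex and ends at x crosses each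
   edge on the path from r to x at least once and every other edge at least
   twice, so its weight is at least 2W - d(x), where W is the total edge weight
   and d(x) = dist(r, x).  Conversely, a depth-first walk that explores the
   branch of a vertex t last weighs 2W - d(t).  A one-agent strategy is
   a single exploring walk plus the invocation cost q, so optimality gives
   d(t) <= d(x) for all t; hence x is not the root and has no child y, since
   d(y) > d(x). *)

Section WalkWeight.
Variables (R : realFieldType) (V : finType) (w : V -> V -> R).

Lemma walk_weight_cat x p1 p2 :
  walk_weight w x (p1 ++ p2) = walk_weight w x p1 + walk_weight w (last x p1) p2.
Proof. by elim: p1 x => [|y p IH] x /=; rewrite ?add0r // IH addrA. Qed.

Lemma walk_weight_rcons x p y :
  walk_weight w x (rcons p y) = walk_weight w x p + w (last x p) y.
Proof. by rewrite -cats1 walk_weight_cat /= addr0. Qed.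

End WalkWeight.

Section Crossings.
Variables (T : Type) (P : pred T).

Fixpoint crossings (x : T) (p : seq T) : nat :=
  if p is y :: p' then ((P x != P y) + crossings y p')%N else 0%N.

Lemma crossings_last x p : ((P x != P (last x p)) <= crossings x p)%N.
Proof.
elim: p x => [|y p IH] x /=; first by rewrite eqxx.
by move: (IH y); case: (P x); case: (P y); case: (P (last y p)) => /=; lia.
Qed.

Lemma crossings_ge2 x p :
  ~~ P x -> has P p -> ~~ P (last x p) -> (2 <= crossings x p)%N.
Proof.
elim: p x => [//|y p IH] x /= /negbTE Px.
case Py: (P y) => /=; last by move=> hp Pl; rewrite Px /= IH ?Py.
move=> _ Pl.
by have := crossings_last y p; rewrite Py (negbTE Pl) Px /=; lia.
Qed.

End Crossings.

Section Runs.
Variables (R : realFieldType) (V : finType) (e : rel V) (w : V -> V -> R).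
Variables (r : V) (q : R).

Lemma size_run pos s p c vis :
  run e w r q pos s = Some (p, c, vis) -> (size pos <= size p)%N.
Proof.
elim: s pos c vis => [|[|i v] s IH] pos c vis /=; first by case=> ->.
- case H: run => [[[p' c'] vis']|] // [ep _ _]; subst p.
  by have := IH _ _ _ H; rewrite size_rcons; apply: ltnW.
- case: ifP => // _; case H: run => [[[p' c'] vis']|] // [ep _ _]; subst p.
  by have := IH _ _ _ H; rewrite size_set_nth; apply: leq_trans; apply: leq_maxr.
Qed.

Lemma run_one_agent s a x c vis :
  run e w r q [:: a] s = Some ([:: x], c, vis) ->
  [/\ path e a vis, last a vis = x & c = walk_weight w a vis].
Proof.
elim: s a c vis => [|[|i v] s IH] a c vis /=; first by case=> -> <- <-.
- by case H: run => [[[p' c'] vis']|] // [ep _ _]; have := size_run H; rewrite ep.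
- case: ifP => // /andP[]; case: i => [|//] _ /= eav.
  case H: run => [[[p' c'] vis']|] // [ep <- <-]; rewrite ep in H.
  by have [pv lv ->] := IH _ _ _ H; rewrite /= eav pv lv.
Qed.

Lemma run_walk a p : path e a p ->
  run e w r q [:: a] (map (Traverse 0) p) = Some ([:: last a p], walk_weight w a p, p).
Proof. by elim: p a => [|y p IH] a //= /andP[-> /IH ->]. Qed.

Lemma explores_one_agent s x c :
  explores_with e w r q s [:: x] c ->
  exists p, [/\ path e r p, last r p = x, c = q + walk_weight w r p
              & forall v, v \in r :: p].
Proof.
case=> vis []; case: s => [|[|i v] s] //=.
case H: run => [[[p' c'] vis']|] // [ep <- <-] cov; rewrite ep in H.
by have [pv lv ->] := run_one_agent H; exists vis'.
Qed.

Lemma optimal_cost_le s p c : cost_optimal e w r q s ->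
  explores_with e w r q s p c ->
  forall s' p' c', explores_with e w r q s' p' c' -> c <= c'.
Proof.
move=> [p0 [c0 [[vis0 [run0 _]] opt]]] [vis [run_s _]].
by move: run0; rewrite run_s => -[_ -> _].
Qed.

Lemma walk_explores p : path e r p -> (forall v, v \in r :: p) ->
  explores_with e w r q (Invoke V :: map (Traverse 0) p) [:: last r p]
    (q + walk_weight w r p).
Proof. by move=> pp cov; exists (r :: p); rewrite /= run_walk. Qed.

End Runs.

Section RootedTree.
Variables (R : realFieldType) (V : finType) (e : rel V) (w : V -> V -> R) (r : V).
Hypothesis tree : is_tree e.
Hypothesis w_gt0 : forall x y, e x y -> 0 < w x y.
Hypothesis w_sym : forall x y, e x y -> w x y = w y x.

Let e_sym : symmetric e. Proof. by case: tree. Qed.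
Let e_irr : irreflexive e. Proof. by case: tree. Qed.
Let e_connected : connected_graph e. Proof. by case: tree. Qed.
Let e_acyclic : ~ has_cycle e. Proof. by case: tree. Qed.

Definition deledge (a b : V) : rel V :=
  [rel x y | e x y && ~~ ((x == a) && (y == b) || (x == b) && (y == a))].

Lemma deledge_sym a b : symmetric (deledge a b).
Proof.
move=> x y; rewrite /deledge /= e_sym; congr (_ && ~~ _).
by case: (x == a); case: (y == b); case: (x == b); case: (y == a).
Qed.

Lemma deledge_disconnects a b : e a b -> ~~ connect (deledge a b) a b.
Proof.
move=> eab; apply/negP => /connectP[p pp lp].
move: lp; case/shortenP: pp => p' pp' up' _ lp'.
apply: e_acyclic; exists a, p'; split => //; last by rewrite -lp' e_sym.
- case: p' pp' up' lp' => [|z [|z' p'']] //= => [_ _ ba|/andP[+ _] _ bz].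
    by rewrite ba e_irr in eab.
  by rewrite -bz /deledge /= !eqxx andbF.
- by apply: sub_path pp' => x y /andP[].
Qed.

Definition parent (u : V) : V :=
  odflt r [pick z | e z u && connect (deledge z u) r z].

Lemma parentP u :
  u != r -> e (parent u) u && connect (deledge (parent u) u) r (parent u).
Proof.
rewrite /parent; case: pickP => [z //|none] ur /=; exfalso.
have /connectP[p0 pp0 lp0] := e_connected r u.
move: lp0; case/shortenP: pp0 => p' pp' up' _.
case/lastP: p' pp' up' => [_ _ /eqP|p z]; first by rewrite (negbTE ur).
rewrite last_rcons rcons_path -rcons_cons rcons_uniq => /andP[pp ez] /andP[up _] zu.
subst z; have /negP[] := none (last r p); rewrite ez /=.
apply/connectP; exists p => //; apply: (@sub_in_path _ (predC1 u)) pp.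
  move=> x y /= xu yu exy; rewrite /deledge /= exy /=.
  by rewrite (negbTE yu) (negbTE xu) !andbF.
by apply/allP => y yp /=; apply: contraNneq up => <-.
Qed.

Lemma parent_edge u : u != r -> e (parent u) u.
Proof. by case/parentP/andP. Qed.

Lemma parent_neq u : u != r -> parent u != u.
Proof. by move/parent_edge; apply: contraTneq => ->; rewrite e_irr. Qed.

(* [parent r] is a junk value; acyclicity makes the pick fail, so it is [r]. *)
Lemma parent_root : parent r = r.
Proof.
rewrite /parent; case: pickP => // z /andP[ezr].
by rewrite (sym_connect_sym (@deledge_sym _ _)) (negbTE (deledge_disconnects ezr)).
Qed.

Definition subtree (u : V) : pred V := connect (deledge (parent u) u) u.

Lemma subtree_refl u : subtree u u.
Proof. exact: connect0. Qed.

Lemma subtree_root u : u != r -> ~~ subtree u r.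
Proof.
move=> ur; have /andP[epu cr] := parentP ur; apply: contra (deledge_disconnects epu).
by rewrite (sym_connect_sym (@deledge_sym _ _)) => /connect_trans; apply.
Qed.

Lemma subtree_parent u : u != r -> ~~ subtree u (parent u).
Proof.
move=> ur; have /andP[epu _] := parentP ur; apply: contra (deledge_disconnects epu).
by rewrite (sym_connect_sym (@deledge_sym _ _)).
Qed.

Lemma subtree_edge u v : e v u -> parent u != v -> subtree u v.
Proof.
move=> evu puv; apply: connect1.
have vu : v != u by apply: contraTneq evu => ->; rewrite e_irr.
by rewrite /deledge /= e_sym evu (negbTE vu) [v == _]eq_sym (negbTE puv) !andbF.
Qed.

Lemma subtree_exit u a b :
  e a b -> subtree u a -> ~~ subtree u b -> a = u /\ b = parent u.
Proof.
move=> eab ua ub; case Hab: (deledge (parent u) u a b).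
  by case/negP: ub; apply: connect_trans ua (connect1 Hab).
move: Hab; rewrite /deledge /= eab /= => /negbFE/orP[]/andP[/eqP-> /eqP bu] //.
by rewrite bu subtree_refl in ub.
Qed.

Lemma subtree_cross u a b : e a b -> subtree u a != subtree u b ->
  (a = u /\ b = parent u) \/ (a = parent u /\ b = u).
Proof.
move=> eab; case ua: (subtree u a); case ub: (subtree u b) => //= _.
  by left; apply: subtree_exit; rewrite ?ub.
rewrite e_sym in eab; have [-> ->] := subtree_exit eab ub (negbT ua).
by right.
Qed.

Lemma parent_antisym u v : u != r -> v != r -> parent u = v -> parent v != u.
Proof.
move=> ur vr pu; apply/eqP => pv; have /andP[euv cu] := parentP ur.
have /andP[_ cv] := parentP vr; rewrite pu in euv cu; rewrite pv in cv.
case/negP: (deledge_disconnects euv).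
rewrite (sym_connect_sym (@deledge_sym _ _)) in cu; apply: connect_trans cu _.
rewrite (@eq_connect _ _ (deledge u v)) // => x y.
by rewrite /deledge /= orbC.
Qed.

Lemma crossing_unique u v a b : u != r -> v != r -> e a b ->
  subtree u a != subtree u b -> subtree v a != subtree v b -> u = v.
Proof.
move=> ur vr eab /(subtree_cross eab) hu /(subtree_cross eab) hv.
case: hu hv => [[-> ->]|[-> ->]] [[e1 e2]|[e1 e2]] //.
- by have := parent_antisym ur vr e2; rewrite e1 eqxx.
- by have := parent_antisym ur vr e1; rewrite e2 eqxx.
Qed.

Definition ancestors (v : V) : {set V} := [set u | (u != r) && subtree u v].

Lemma ancestors_root : ancestors r = set0.
Proof.
apply/setP => u; rewrite !inE; case: (eqVneq u r) => //= ur.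
exact: negbTE (subtree_root ur).
Qed.

Lemma mem_ancestors_self v : v != r -> v \in ancestors v.
Proof. by move=> vr; rewrite inE vr subtree_refl. Qed.

Lemma ancestors_parent v : v != r -> ancestors v = v |: ancestors (parent v).
Proof.
move=> vr; apply/setP => u; rewrite !inE.
case: (eqVneq u v) => [->|uv]; first by rewrite vr subtree_refl.
case: (eqVneq u r) => [//|ur] /=.
have edge_kept : deledge (parent u) u (parent v) v.
  rewrite /deledge /= parent_edge //= [v == u]eq_sym (negbTE uv) andbF /=.
  by apply/andP => -[/eqP pvu /eqP vpu]; case/eqP: (parent_antisym ur vr (esym vpu)).
apply/idP/idP => [uv'|upv]; last exact: connect_trans upv (connect1 edge_kept).
by apply: connect_trans uv' (connect1 _); rewrite deledge_sym.
Qed.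

Lemma card_ancestors_parent v :
  v != r -> #|ancestors v| = #|ancestors (parent v)|.+1.
Proof.
move=> vr; rewrite ancestors_parent // cardsU1 inE.
by rewrite (negbTE (subtree_parent vr)) andbF.
Qed.

Lemma parent_ind (P : V -> Prop) :
  P r -> (forall v, v != r -> P (parent v) -> P v) -> forall v, P v.
Proof.
move=> Pr IH v; have [n] := ubnP #|ancestors v|; elim: n v => // n IHn v.
case: (eqVneq v r) => [-> //|vr]; rewrite card_ancestors_parent // ltnS.
by move/IHn; apply: IH.
Qed.

Lemma ancestors_sub u v : u \in ancestors v -> ancestors u \subset ancestors v.
Proof.
elim/parent_ind: v => [|v vr IH]; first by rewrite ancestors_root inE.
rewrite [ancestors v]ancestors_parent // in_setU1 => /orP[/eqP-> | /IH].
  by rewrite -ancestors_parent.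
by move/subset_trans; apply; apply: subsetUr.
Qed.

Lemma ancestors_antisym u v : u \in ancestors v -> v \in ancestors u -> u = v.
Proof.
move=> uv vu; apply/eqP; apply: contraT => neq_uv.
have vr : v != r by apply: contraTneq uv => ->; rewrite ancestors_root inE.
move: uv; rewrite ancestors_parent // in_setU1 (negbTE neq_uv) /=.
move/ancestors_sub/subsetP/(_ v vu); rewrite inE.
by rewrite (negbTE (subtree_parent vr)) andbF.
Qed.

Lemma edge_parent x y : e x y ->
  (y != r /\ parent y = x) \/ (x != r /\ parent x = y).
Proof.
move=> exy; have eyx : e y x by rewrite e_sym.
case: (eqVneq y r) => [yr|yr]; case: (eqVneq x r) => [xr|xr].
- by rewrite xr yr e_irr in exy.
- right; split => //; apply/eqP; apply: contraNT (subtree_root xr) => pxy.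
  by rewrite -yr subtree_edge.
- left; split => //; apply/eqP; apply: contraNT (subtree_root yr) => pyx.
  by rewrite -xr subtree_edge.
case: (eqVneq (parent y) x) => [|pyx]; first by left.
case: (eqVneq (parent x) y) => [|pxy]; first by right.
have yx : y = x.
  by apply: ancestors_antisym; rewrite inE ?xr ?yr subtree_edge.
by rewrite yx e_irr in exy.
Qed.

Lemma subtree_enter u x p : u != r -> path e x p ->
  ~~ subtree u x -> subtree u (last x p) -> parent u \in x :: p.
Proof.
move=> ur; elim: p x => [|y p IH] x /=; first by move=> _ /negbTE ->.
move=> /andP[exy pp] ux ul; case uy: (subtree u y).
  by rewrite e_sym in exy; have [_ <-] := subtree_exit exy uy ux; rewrite mem_head.
by rewrite inE (IH y pp (negbT uy) ul) orbT.
Qed.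

Definition wpar (u : V) : R := w (parent u) u.

Lemma wpar_gt0 u : u != r -> 0 < wpar u.
Proof. by move/parent_edge/w_gt0. Qed.

Definition depth (v : V) : R := \sum_(u in ancestors v) wpar u.

Lemma depth_root : depth r = 0.
Proof. by rewrite /depth ancestors_root big_set0. Qed.

Lemma depth_parent v : v != r -> depth v = wpar v + depth (parent v).
Proof.
move=> vr; rewrite /depth ancestors_parent // big_setU1 //= inE.
by rewrite (negbTE (subtree_parent vr)) andbF.
Qed.

Lemma depth_gt0 v : v != r -> 0 < depth v.
Proof.
move=> vr; rewrite depth_parent // ltr_pwDl ?wpar_gt0 //.
by apply: sumr_ge0 => u; rewrite inE => /andP[/wpar_gt0/ltW].
Qed.

Lemma depth_sum v : depth v = \sum_(u | u != r) wpar u * (subtree u v)%:R.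
Proof.
rewrite /depth (eq_bigl (fun u => (u != r) && subtree u v)) => [|u]; last first.
  by rewrite inE.
rewrite big_mkcondr; apply: eq_bigr => u _.
by case: subtree; rewrite ?mulr1 ?mulr0.
Qed.

Lemma depth_walk v :
  exists p, [/\ path e r p, last r p = v & walk_weight w r p = depth v].
Proof.
elim/parent_ind: v => [|v vr [p [pp lp wp]]]; first by exists [::]; rewrite depth_root.
exists (rcons p v); split; first by rewrite rcons_path pp lp parent_edge.
  by rewrite last_rcons.
by rewrite walk_weight_rcons wp lp [depth v]depth_parent // addrC.
Qed.

Lemma edge_weight_ge a b : e a b ->
  \sum_(u | u != r) wpar u * (subtree u a != subtree u b)%:R <= w a b.
Proof.
pose cross u := subtree u a != subtree u b.
move=> eab; rewrite (eq_bigr (fun u => if cross u then wpar u else 0)); last first.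
  by move=> u _; rewrite /cross; case: (_ != _); rewrite ?mulr1 ?mulr0.
rewrite -big_mkcondr /=.
case: (pickP [pred u | (u != r) && cross u]) => [u0 /andP[u0r hu0]|none].
  rewrite (bigD1 u0) /= ?u0r // big1 ?addr0 => [|u /andP[/andP[ur hu] /eqP[]]].
    rewrite /wpar; case: (subtree_cross eab hu0) => -[-> ->] //.
    by rewrite w_sym ?parent_edge.
  exact: crossing_unique ur u0r eab hu hu0.
by rewrite big_pred0 // ltW ?w_gt0.
Qed.

Lemma walk_weight_ge_crossings x p : path e x p ->
  \sum_(u | u != r) wpar u * (crossings (subtree u) x p)%:R <= walk_weight w x p.
Proof.
elim: p x => [|y p IH] x /= => [_|/andP[exy /IH]].
  by rewrite big1 // => u _; rewrite mulr0.
under eq_bigr do rewrite natrD mulrDr.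
by rewrite big_split /=; apply: lerD; apply: edge_weight_ge.
Qed.

Lemma depth_le_walk p : path e r p -> depth (last r p) <= walk_weight w r p.
Proof.
move=> pp; apply: le_trans (walk_weight_ge_crossings pp); rewrite depth_sum.
apply: ler_sum => u ur; rewrite ler_pM2l ?wpar_gt0 // ler_nat.
by have := crossings_last (subtree u) r p; rewrite (negbTE (subtree_root ur)) /= negbK.
Qed.

Lemma is_dist_depth v d : is_dist e w r v d -> d = depth v.
Proof.
move=> [[p [pp lp <-]] le_p]; have [p' [pp' lp' wp']] := depth_walk v.
apply/eqP; rewrite eq_le; apply/andP; split; first by rewrite -wp'; apply: le_p.
by rewrite -lp depth_le_walk.
Qed.

Definition tree_weight : R := \sum_(u | u != r) wpar u.

(* An edge above [last r p] is crossed at least once, any other edge at least twice. *)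
Lemma exploring_walk_ge p : path e r p -> (forall v, v \in r :: p) ->
  tree_weight *+ 2 - depth (last r p) <= walk_weight w r p.
Proof.
move=> pp cov; apply: le_trans (walk_weight_ge_crossings pp).
rewrite depth_sum /tree_weight -sumrMnl -sumrB; apply: ler_sum => u ur.
rewrite -[wpar u *+ 2]mulr_natr -mulrBr -natrB; last by case: subtree.
rewrite ler_pM2l ?wpar_gt0 // ler_nat.
have ru := subtree_root ur; case: (boolP (subtree u (last r p))) => [ul|nul].
  by have := crossings_last (subtree u) r p; rewrite ul (negbTE ru).
apply: crossings_ge2 => //; apply/hasP; exists u; last exact: subtree_refl.
by have := cov u; rewrite inE (negbTE ur).
Qed.

Definition span_weight (S : {set V}) : R := \sum_(u in S | u != r) wpar u.

Lemma span_weight_ge0 (S : {set V}) : 0 <= span_weight S.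
Proof. by apply: sumr_ge0 => u /andP[_ /wpar_gt0/ltW]. Qed.

Lemma span_weightD1 (S : {set V}) y :
  y \in S -> y != r -> span_weight S = wpar y + span_weight (S :\ y).
Proof.
move=> yS yr; rewrite /span_weight (bigD1 y) ?yS //=; congr (_ + _).
by apply: eq_bigl => u; rewrite in_setD1 andbC andbA.
Qed.

Lemma span_weightT : span_weight [set: V] = tree_weight.
Proof. by apply: eq_bigl => u; rewrite in_setT. Qed.

Definition parent_closed (S : {set V}) : Prop :=
  forall z, z \in S -> z != r -> parent z \in S.

Definition leaf_of (S : {set V}) (y : V) : bool :=
  [&& y \in S, y != r & [forall z in S, parent z != y]].

Lemma leaf_below (S : {set V}) z :
  z \in S -> z != r -> exists2 y, leaf_of S y & z \in ancestors y.
Proof.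
move=> zS zr.
pose below := [pred y | (y \in S) && (z \in ancestors y)].
have zz : below z by rewrite /= zS mem_ancestors_self.
case: (arg_maxnP (fun y => #|ancestors y|) zz) => y /andP[yS zy] ymax.
have yr : y != r by apply: contraTneq zy => ->; rewrite ancestors_root inE.
exists y => //; rewrite /leaf_of yS yr /=; apply/forall_inP => c cS; apply/eqP => cy.
have cr : c != r by apply: contraTneq yr => cr; rewrite -cy cr parent_root eqxx.
have zc : z \in ancestors c by rewrite ancestors_parent // cy in_setU1 zy orbT.
by move: (ymax c); rewrite /= cS zc card_ancestors_parent // cy ltnn; move/(_ isT).
Qed.

Lemma parent_closedD1 (S : {set V}) y :
  parent_closed S -> leaf_of S y -> parent_closed (S :\ y).
Proof.
move=> closedS /and3P[_ _ /forall_inP noc] z; rewrite in_setD1 => /andP[_ zS] zr.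
by rewrite in_setD1 noc // closedS.
Qed.

Definition dfs_walk (S : {set V}) (t : V) (p : seq V) : Prop :=
  [/\ path e r p, last r p = t, {subset S <= r :: p}
    & walk_weight w r p <= span_weight S *+ 2 - depth t].

Lemma dfs_walk_detour (S : {set V}) t y p :
  y \in S -> y != r -> parent y \in S ->
  dfs_walk (S :\ y) t p -> exists p', dfs_walk S t p'.
Proof.
move=> yS yr pyS [pp lp cov wle]; have epy := parent_edge yr.
have /cov py_p : parent y \in S :\ y by rewrite in_setD1 parent_neq.
move: pp lp cov wle; case/splitPl: py_p => p1 p2 lp1 pp lp cov wle.
exists (p1 ++ y :: parent y :: p2); split.
- by move: pp; rewrite !cat_path lp1 /= epy e_sym epy.
- by rewrite last_cat -lp last_cat lp1.
- move=> v vS; case: (eqVneq v y) => [->|vy].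
    by rewrite !(inE, mem_cat) eqxx !orbT.
  have := cov v; rewrite in_setD1 vy vS => /(_ isT); rewrite !(inE, mem_cat).
  by case/orP => [->|/orP[]->]; rewrite ?orbT.
- move: wle; rewrite !walk_weight_cat lp1 /= (span_weightD1 yS yr) -(w_sym epy).
  by rewrite /wpar; lra.
Qed.

Lemma dfs_walk_rcons (S : {set V}) t p : t \in S -> t != r ->
  dfs_walk (S :\ t) (parent t) p -> dfs_walk S t (rcons p t).
Proof.
move=> tS tr [pp lp cov wle]; split.
- by rewrite rcons_path pp lp parent_edge.
- by rewrite last_rcons.
- move=> v vS; rewrite -rcons_cons mem_rcons inE; case: eqP => //= /eqP vt.
  by apply: cov; rewrite in_setD1 vt.
- move: wle; rewrite walk_weight_rcons lp (span_weightD1 tS tr) (depth_parent tr).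
  by rewrite /wpar; lra.
Qed.

(* Induction on [S]: strip a leaf of [S] other than [t] by a detour to it, or,
   when [t] is the only leaf, reach [t] last. *)
Lemma dfs_walk_exists (S : {set V}) t :
  parent_closed S -> r \in S -> t \in S -> exists p, dfs_walk S t p.
Proof.
have [n] := ubnP #|S|; elim: n S t => // n IH S t ltS closedS rS tS.
have cardD1 y : y \in S -> (#|S :\ y| < n)%N.
  by move=> yS; move: ltS; rewrite (cardsD1 y) yS.
case: (pickP [pred y | leaf_of S y && (y != t)]) => [y /andP[leaf_y yt]|noleaf].
  have /and3P[yS yr _] := leaf_y.
  have [||p walk_p] :=
    IH (S :\ y) t (cardD1 y yS) (parent_closedD1 closedS leaf_y).
  - by rewrite in_setD1 eq_sym yr.
  - by rewrite in_setD1 eq_sym yt.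
  by apply: dfs_walk_detour yS yr (closedS y yS yr) walk_p.
case: (eqVneq t r) => [tr|tr].
  exists [::]; split => //=; last first.
    by rewrite tr depth_root subr0 mulrn_wge0 ?span_weight_ge0.
  move=> v vS; rewrite mem_seq1; apply: contraT => vr.
  have [y leaf_y _] := leaf_below vS vr; have /and3P[_ yr _] := leaf_y.
  by move: (noleaf y); rewrite /= leaf_y tr yr.
have [y leaf_y _] := leaf_below tS tr.
have yt : y = t by apply/eqP; move: (noleaf y); rewrite /= leaf_y => /negbFE.
subst y; have [||p walk_p] := IH (S :\ t) (parent t) (cardD1 t tS)
  (parent_closedD1 closedS leaf_y).
- by rewrite in_setD1 eq_sym tr.
- by rewrite in_setD1 parent_neq ?closedS.
by exists (rcons p t); apply: dfs_walk_rcons.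
Qed.

Lemma deepest_is_leaf x :
  (1 < #|V|)%N -> (forall v, depth v <= depth x) -> leaf e r x.
Proof.
move=> /card_gt1P[a [b [_ _ ab]]] deepest.
have [t tr] : exists t, t != r.
  by case: (eqVneq a r) => [ar|]; [exists b; rewrite -ar eq_sym | exists a].
have xr : x != r.
  by apply: contraTneq (deepest t) => ->; rewrite depth_root -ltNge depth_gt0.
split=> // y [p [pp up lp]]; move: pp; rewrite rcons_path lp => /andP[pp exy].
case: (edge_parent exy) => [[yr pyx]|[_ pxy]].
  by have := deepest y; have := wpar_gt0 yr; rewrite depth_parent // pyx; lra.
have := subtree_enter xr pp (subtree_root xr).
rewrite lp subtree_refl pxy => /(_ isT).
by move: up; rewrite -rcons_cons rcons_uniq => /andP[/negP].
Qed.

Variable q : R.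

(* Both the given strategy and the depth-first walk towards [t] invoke one
   agent. *)
Lemma optimal_one_agent_deepest s x c :
  cost_optimal e w r q s -> explores_with e w r q s [:: x] c ->
  forall t, depth t <= depth x.
Proof.
move=> opt ex t; have [p [pp <- c_p cov]] := explores_one_agent ex.
have [p' [pp' lp' cov' le_p']] :=
  dfs_walk_exists (fun z _ _ => in_setT (parent z)) (in_setT r) (in_setT t).
have := optimal_cost_le opt ex
  (walk_explores w q pp' (fun v => cov' v (in_setT v))).
have := exploring_walk_ge pp cov; rewrite c_p span_weightT in le_p' *; lra.
Qed.

End RootedTree.

Theorem mainTheorem8 (R : realFieldType) (V : finType) (e : rel V)
    (w : V -> V -> R) (r : V) (q : R) :
  is_tree e ->
  (forall x y, e x y -> 0 < w x y) ->
  (forall x y, e x y -> w x y = w y x) ->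
  (1 < #|V|)%N ->
  0 <= q ->
  forall (s : seq (move V)) (x : V) (c : R),
    cost_optimal e w r q s ->
    explores_with e w r q s [:: x] c ->
    leaf e r x /\
    (forall (v : V) (dx dv : R),
        is_dist e w r x dx -> is_dist e w r v dv -> dv <= dx).
Proof.
move=> tree w_gt0 w_sym cardV _ s x c opt ex.
have deepest := optimal_one_agent_deepest tree w_gt0 w_sym opt ex.
have dist_depth := is_dist_depth tree w_gt0 w_sym.
split; first exact: (deepest_is_leaf tree w_gt0 cardV deepest).
by move=> v dx dv /dist_depth -> /dist_depth ->.
Qed.
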